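(* For every $\varphi\in\mathcal{L}_{\mathrm{CL}}$: $\vdash_{\mathrm{CL}^{\mathrm{FI}}}\varphi$ if and only if $\vdash_{\mathrm{CL}}\varphi$.
   Context: $N=\{1,\dots,n\}$ is a finite set of agents, $\mathrm{Prop}$ a countable set of atoms. $\mathcal{L}_{\mathrm{CL}}$: $\varphi ::= p\mid\neg\varphi\mid(\varphi\wedge\psi)\mid[C]\varphi$ ($C\subseteq N$); $\mathcal{L}_{\mathrm{CL}^{\mathrm{FI}}}$ additionally has a primitive modality $\mathrm{FI}_C(\varphi)$. Coalition Logic $\mathrm{CL}$ (Pauly's axiomatization) over $\mathcal{L}_{\mathrm{CL}}$: all propositional tautologies; $\neg[C]\bot$; $[C]\top$; $\neg[\emptyset]\neg\varphi\to[N]\varphi$; $[C](\varphi\wedge\psi)\to[C]\varphi$; $[C_1]\varphi_1\wedge[C_2]\varphi_2\to[C_1\cup C_2](\varphi_1\wedge\varphi_2)$ for $C_1\cap C_2=\emptyset$; modus ponens; rule RE: from $\varphi\leftrightarrow\psi$ infer $[C]\varphi\leftrightarrow[C]\psi$. $\mathrm{CL}^{\mathrm{FI}}$ consists of these schemes and rules instantiated over $\mathcal{L}_{\mathrm{CL}^{\mathrm{FI}}}$ plus the axiom $\mathrm{FI}_C(\varphi)\leftrightarrow(\neg[C]\varphi\wedge\neg[C]\neg\varphi)$. *)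

From mathcomp Require Import all_boot.
Set Implicit Arguments. Unset Strict Implicit. Unset Printing Implicit Defensive.

(* Agents: N = 'I_n (n agents); coalitions: {set 'I_n}; atoms: nat. *)

Inductive pform : Type :=
| PVar : nat -> pform
| PNeg : pform -> pform
| PAnd : pform -> pform -> pform.

Fixpoint peval (v : nat -> bool) (t : pform) : bool :=
  match t with
  | PVar i => v i
  | PNeg t => ~~ peval v t
  | PAnd t u => peval v t && peval v u
  end.

Definition ptaut (t : pform) : Prop := forall v : nat -> bool, peval v t = true.

Inductive form (n : nat) : Type :=
| Var : nat -> form n
| Neg : form n -> form n
| And : form n -> form n -> form n
| Box : {set 'I_n} -> form n -> form n.
Arguments Var {n}.

Inductive fform (n : nat) : Type :=
| FVar : nat -> fform n
| FNeg : fform n -> fform n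
| FAnd : fform n -> fform n -> fform n
| FBox : {set 'I_n} -> fform n -> fform n
| FFI  : {set 'I_n} -> fform n -> fform n.
Arguments FVar {n}.

Fixpoint embed n (f : form n) : fform n :=
  match f with
  | Var p => FVar p
  | Neg f => FNeg (embed f)
  | And f g => FAnd (embed f) (embed g)
  | Box C f => FBox C (embed f)
  end.

Definition Imp n (a b : form n) := Neg (And a (Neg b)).
Definition Iff n (a b : form n) := And (Imp a b) (Imp b a).
Definition Top n : form n := Neg (And (Var 0) (Neg (Var 0))).
Definition Bot n : form n := Neg (Top n).

Definition FImp n (a b : fform n) := FNeg (FAnd a (FNeg b)).
Definition FIff n (a b : fform n) := FAnd (FImp a b) (FImp b a).
Definition FTop n : fform n := FNeg (FAnd (FVar 0) (FNeg (FVar 0))).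
Definition FBot n : fform n := FNeg (FTop n).

Fixpoint psubst n (s : nat -> form n) (t : pform) : form n :=
  match t with
  | PVar i => s i
  | PNeg t => Neg (psubst s t)
  | PAnd t u => And (psubst s t) (psubst s u)
  end.

Fixpoint fpsubst n (s : nat -> fform n) (t : pform) : fform n :=
  match t with
  | PVar i => s i
  | PNeg t => FNeg (fpsubst s t)
  | PAnd t u => FAnd (fpsubst s t) (fpsubst s u)
  end.

Inductive CL_prov (n : nat) : form n -> Prop :=
| CL_taut (t : pform) (s : nat -> form n) : ptaut t -> CL_prov (psubst s t)
| CL_bot (C : {set 'I_n}) : CL_prov (Neg (Box C (Bot n)))
| CL_top (C : {set 'I_n}) : CL_prov (Box C (Top n))
| CL_N (f : form n) :
    CL_prov (Imp (Neg (Box set0 (Neg f))) (Box setT f))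
| CL_mon (C : {set 'I_n}) (f g : form n) :
    CL_prov (Imp (Box C (And f g)) (Box C f))
| CL_sup (C1 C2 : {set 'I_n}) (f1 f2 : form n) :
    C1 :&: C2 = set0 ->
    CL_prov (Imp (And (Box C1 f1) (Box C2 f2)) (Box (C1 :|: C2) (And f1 f2)))
| CL_MP (f g : form n) : CL_prov f -> CL_prov (Imp f g) -> CL_prov g
| CL_RE (C : {set 'I_n}) (f g : form n) :
    CL_prov (Iff f g) -> CL_prov (Iff (Box C f) (Box C g)).

Inductive CLFI_prov (n : nat) : fform n -> Prop :=
| FI_taut (t : pform) (s : nat -> fform n) : ptaut t -> CLFI_prov (fpsubst s t)
| FI_bot (C : {set 'I_n}) : CLFI_prov (FNeg (FBox C (FBot n)))
| FI_top (C : {set 'I_n}) : CLFI_prov (FBox C (FTop n))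
| FI_N (f : fform n) :
    CLFI_prov (FImp (FNeg (FBox set0 (FNeg f))) (FBox setT f))
| FI_mon (C : {set 'I_n}) (f g : fform n) :
    CLFI_prov (FImp (FBox C (FAnd f g)) (FBox C f))
| FI_sup (C1 C2 : {set 'I_n}) (f1 f2 : fform n) :
    C1 :&: C2 = set0 ->
    CLFI_prov (FImp (FAnd (FBox C1 f1) (FBox C2 f2)) (FBox (C1 :|: C2) (FAnd f1 f2)))
| FI_FI (C : {set 'I_n}) (f : fform n) :
    CLFI_prov (FIff (FFI C f) (FAnd (FNeg (FBox C f)) (FNeg (FBox C (FNeg f)))))
| FI_MP (f g : fform n) : CLFI_prov f -> CLFI_prov (FImp f g) -> CLFI_prov g
| FI_RE (C : {set 'I_n}) (f g : fform n) :
    CLFI_prov (FIff f g) -> CLFI_prov (FIff (FBox C f) (FBox C g)).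

From mathcomp Require Import all_boot.

(* CL^FI is a definitional extension of CL.  Unfolding every FI_C(psi) into
   ~[C]psi /\ ~[C]~psi sends each CL^FI-axiom to a CL-axiom (the FI axiom
   becomes an instance of chi <-> chi) and commutes with the rules, so it maps
   CL^FI-theorems to CL-theorems; on L_CL it is the identity.  Conversely a
   CL-derivation, read in L_CL^FI, is a CL^FI-derivation. *)

Fixpoint unfold_FI {n} (f : fform n) : form n :=
  match f with
  | FVar p => Var p
  | FNeg f => Neg (unfold_FI f)
  | FAnd f g => And (unfold_FI f) (unfold_FI g)
  | FBox C f => Box C (unfold_FI f)
  | FFI C f => And (Neg (Box C (unfold_FI f))) (Neg (Box C (Neg (unfold_FI f))))
  end.

Lemma unfold_FI_embed n (f : form n) : unfold_FI (embed f) = f.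
Proof. by elim: f => //= [f -> | f -> g -> | C f ->]. Qed.

Lemma unfold_FI_fpsubst n (s : nat -> fform n) (t : pform) :
  unfold_FI (fpsubst s t) = psubst (fun i => unfold_FI (s i)) t.
Proof. by elim: t => //= [t -> | t -> u ->]. Qed.

Lemma embed_psubst n (s : nat -> form n) (t : pform) :
  embed (psubst s t) = fpsubst (fun i => embed (s i)) t.
Proof. by elim: t => //= [t -> | t -> u ->]. Qed.

Lemma CL_prov_Iff_refl n (f : form n) : CL_prov (Iff f f).
Proof.
pose p_imp_p := PNeg (PAnd (PVar 0) (PNeg (PVar 0))).
have taut_iff : ptaut (PAnd p_imp_p p_imp_p) by move=> v /=; case: (v 0).
exact: (CL_taut (fun _ => f) taut_iff).
Qed.

Lemma CL_prov_unfold_FI n (f : fform n) : CLFI_prov f -> CL_prov (unfold_FI f).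
Proof.
elim=> {f} [t s taut_t | C | C | f | C f g | C1 C2 f1 f2 disj | C f
           | f g _ pf _ pfg | C f g _ pfg].
- by rewrite unfold_FI_fpsubst; apply: CL_taut.
- exact: CL_bot.
- exact: CL_top.
- exact: CL_N.
- exact: CL_mon.
- exact: CL_sup.
- exact: CL_prov_Iff_refl.
- exact: CL_MP pf pfg.
- exact: CL_RE pfg.
Qed.

Lemma CLFI_prov_embed n (f : form n) : CL_prov f -> CLFI_prov (embed f).
Proof.
elim=> {f} [t s taut_t | C | C | f | C f g | C1 C2 f1 f2 disj
           | f g _ pf _ pfg | C f g _ pfg].
- by rewrite embed_psubst; apply: FI_taut.
- exact: FI_bot.
- exact: FI_top.
- exact: FI_N.
- exact: FI_mon.
- exact: FI_sup.
- exact: FI_MP pf pfg.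
- exact: FI_RE pfg.
Qed.

Theorem mainTheorem19 (n : nat) (phi : form n) :
  CLFI_prov (embed phi) <-> CL_prov phi.
Proof.
split; last exact: CLFI_prov_embed.
by move/CL_prov_unfold_FI; rewrite unfold_FI_embed.
Qed.
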